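(* Let $S$ be a graded reduced affine monoid and $\tilde S$ as in the context. If the defining congruence $\sim_S$ has a quadratic Gröbner system (with respect to some admissible total order), then the defining congruence $\sim_{\tilde S}$ also has a quadratic Gröbner system (with respect to some admissible total order).
   Context: A monoid is a commutative cancellative semigroup with identity; affine: finitely generated submonoid of a finitely generated free abelian group; reduced: only unit is the identity. $S$ is graded: $S=\bigsqcup_{d\in\mathbb{N}_0}S_d$, $S_dS_e\subseteq S_{d+e}$, $|s|=d$ for $s\in S_d$. $\tilde S=\{s[i]\mid s\in S,0\le i\le|s|\}$ with $s[i]t[j]=(st)[i+j]$. For a reduced affine monoid $T$ with atom set $\mathcal{A}(T)$, its defining congruence $\sim_T$ is the congruence on the free commutative monoid $\{x^{\alpha}\mid\alpha\in\mathbb{N}_0^{\mathcal{A}(T)}\}$ with $x^{\alpha}\sim_T x^{\gamma}$ iff $\prod t^{\alpha(t)}=\prod t^{\gamma(t)}$ in $T$. An admissible total order $\prec$ on a free commutative monoid satisfies $x\prec y\Rightarrow xz\prec yz$ and $1\prec x$ for $x\ne1$. A finite $\Lambda$ of pairs is a Gröbner system of a congruence $\sim$ if $x\sim y$ and $y\prec x$ for all $(x,y)\in\Lambda$, and every element not divisible by a first component of a pair of $\Lambda$ is $\prec$-minimal in its class. It is quadratic if $|\lambda|\le2$ and $|\mu|\le2$ for all $(x^{\lambda},x^{\mu})\in\Lambda$, where $|\lambda|=\sum\lambda(t)$. *)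

From HB Require Import structures.
From mathcomp Require Import all_boot all_order all_algebra.
From mathcomp Require Import finmap.
Set Implicit Arguments. Unset Strict Implicit. Unset Printing Implicit Defensive.
Import GRing.Theory Num.Theory.
Local Open Scope ring_scope.

(* Monoids are modelled as subsets T of an ambient abelian group V
   (written additively), containing 0 and closed under +.  *)

Definition affine_in (V : zmodType) (T : V -> Prop) : Prop :=
  exists gens : seq V, forall x : V,
    T x <-> exists c : 'I_(size gens) -> nat,
              x = \sum_(i < size gens) gens`_i *+ c i.

Definition reduced (V : zmodType) (T : V -> Prop) : Prop :=
  forall x y : V, T x -> T y -> x + y = 0 -> x = 0.

Definition is_atom (V : zmodType) (T : V -> Prop) (x : V) : Prop :=
  [/\ T x, x <> 0 &
      forall y z : V, T y -> T z -> x = y + z -> y = 0 \/ z = 0].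

Definition atom_set (V : zmodType) (T : V -> Prop) (A : {fset V}) : Prop :=
  forall x : V, x \in A <-> is_atom T x.

(* the free commutative monoid {x^alpha | alpha in N_0^A} *)
Definition expv (V : zmodType) (A : {fset V}) := {ffun A -> nat}.

Definition emul (V : zmodType) (A : {fset V}) (a b : expv A) : expv A :=
  [ffun t => (a t + b t)%N].

Definition eone (V : zmodType) (A : {fset V}) : expv A := [ffun _ => 0%N].

Definition edeg (V : zmodType) (A : {fset V}) (a : expv A) : nat :=
  (\sum_(t : A) a t)%N.

Definition evalA (V : zmodType) (A : {fset V}) (a : expv A) : V :=
  \sum_(t : A) (val t) *+ a t.

Definition defcong (V : zmodType) (A : {fset V}) (a b : expv A) : Prop :=
  evalA a = evalA b.

Definition admissible (V : zmodType) (A : {fset V}) (lt : expv A -> expv A -> Prop)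
  : Prop :=
  [/\ (forall x, ~ lt x x),
      (forall x y z, lt x y -> lt y z -> lt x z),
      (forall x y, x <> y -> lt x y \/ lt y x),
      (forall x y z, lt x y -> lt (emul x z) (emul y z)) &
      (forall x, x <> eone A -> lt (eone A) x)].

Definition divides (V : zmodType) (A : {fset V}) (x z : expv A) : Prop :=
  exists u, z = emul x u.

Definition groebner_system (V : zmodType) (A : {fset V})
  (rel lt : expv A -> expv A -> Prop) (L : seq (expv A * expv A)) : Prop :=
  (forall p, p \in L -> rel p.1 p.2 /\ lt p.2 p.1) /\
  (forall z, (forall p, p \in L -> ~ divides p.1 z) ->
     forall w, rel z w -> z = w \/ lt z w).

Definition quadratic (V : zmodType) (A : {fset V}) (L : seq (expv A * expv A))
  : Prop :=
  forall p, p \in L -> (edeg p.1 <= 2)%N /\ (edeg p.2 <= 2)%N.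

Definition has_quadratic_groebner (V : zmodType) (T : V -> Prop) : Prop :=
  exists A : {fset V}, atom_set T A /\
  exists lt : expv A -> expv A -> Prop, admissible lt /\
  exists L : seq (expv A * expv A),
    groebner_system (@defcong V A) lt L /\ quadratic L.

(* S~ = { s[i] | s in S, 0 <= i <= |s| }, realised as the pairs (s, i)
   inside Z^m x Z, so that s[i] t[j] = (st)[i+j] is addition. *)
Definition tilde (m : nat) (S : 'rV[int]_m -> Prop) (deg : 'rV[int]_m -> nat)
  : ('rV[int]_m * int)%type -> Prop :=
  fun p => S p.1 /\ (0 <= p.2 <= (deg p.1)%:Z).

From mathcomp Require Import all_boot all_order all_algebra.
From mathcomp Require Import finmap zify.
From Stdlib Require Import Classical.
Import Order.TTheory GRing.Theory Num.Theory.
Local Open Scope ring_scope.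

(* The atoms of S~ are the s[i] with s an atom of S and 0 <= i <= |s|, so a monomial in them
   is its projection to a monomial of S (forget the indices) together with a distribution of
   indices.  Order S~-monomials by the given order on their projections and break ties
   lexicographically, putting the variables of an atom with larger index first.  A monomial
   that is not minimal in its class is then divisible by a reducible quadratic monomial.  If
   its projection is not minimal, it is divisible by a lift d of a leading term of the Groebner
   system of S; the index sum of d is at most the degree of that term, which equals the degree
   of the trailing term, so the indices of d can be redistributed over a lift of the trailing
   term.  If only the indices are not minimal, a comparison of index sums produces a factor
   s[i] t[j] with i < |s|, 0 < j and t[j] after s[i+1], which s[i+1] t[j-1] undercuts.  The
   finitely many reducible quadratic monomials, each with a reduction, form the Groebner system
   of S~. *)

Set Implicit Arguments. Unset Strict Implicit. Unset Printing Implicit Defensive.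

Section FreeMonoid.
Variables (W : zmodType) (B : {fset W}).
Implicit Types x y z : expv B.

Definition evar (t : B) : expv B := [ffun u => nat_of_bool (u == t)].

Definition wdeg (w : B -> nat) z : nat := (\sum_t w t * z t)%N.

Lemma emulE x y t : emul x y t = (x t + y t)%N.
Proof. by rewrite ffunE. Qed.

Lemma eoneE t : eone B t = 0%N.
Proof. by rewrite ffunE. Qed.

Lemma emulA x y z : emul x (emul y z) = emul (emul x y) z.
Proof. by apply/ffunP => t; rewrite !emulE addnA. Qed.

Lemma emul1l x : emul (eone B) x = x.
Proof. by apply/ffunP => t; rewrite emulE eoneE. Qed.

Lemma emulI x : injective (emul x).
Proof. by move=> y y' /ffunP E; apply/ffunP => t; move: (E t); rewrite !emulE => /addnI. Qed.

Lemma divides_of_le x z : (forall t, x t <= z t)%N -> divides x z.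
Proof.
by move=> le_xz; exists [ffun t => z t - x t]%N; apply/ffunP => t; rewrite emulE ffunE subnKC.
Qed.

Lemma evar_divides x t : (0 < x t)%N -> exists x', x = emul (evar t) x'.
Proof.
move=> xt_gt0; have [x' ->] : divides (evar t) x.
  by apply: divides_of_le => u; rewrite ffunE; case: eqP => [->|].
by exists x'.
Qed.

Lemma wdeg_emul w x y : wdeg w (emul x y) = (wdeg w x + wdeg w y)%N.
Proof. by rewrite /wdeg -big_split; apply: eq_bigr => t _; rewrite emulE mulnDr. Qed.

Lemma wdeg_eone w : wdeg w (eone B) = 0%N.
Proof. by rewrite /wdeg big1 // => t _; rewrite eoneE muln0. Qed.

Lemma wdeg_evar w t : wdeg w (evar t) = w t.
Proof.
rewrite /wdeg (bigD1 t) //= ffunE eqxx muln1 big1 ?addn0 // => u /negbTE ut.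
by rewrite ffunE ut muln0.
Qed.

Lemma edeg_wdeg x : edeg x = wdeg (fun=> 1%N) x.
Proof. by apply: eq_bigr => t _; rewrite mul1n. Qed.

Lemma edeg_emul x y : edeg (emul x y) = (edeg x + edeg y)%N.
Proof. by rewrite !edeg_wdeg wdeg_emul. Qed.

Lemma edeg_eone : edeg (eone B) = 0%N.
Proof. by rewrite edeg_wdeg wdeg_eone. Qed.

Lemma edeg_evar t : edeg (evar t) = 1%N.
Proof. by rewrite edeg_wdeg wdeg_evar. Qed.

Lemma leq_edeg x t : (x t <= edeg x)%N.
Proof. by rewrite /edeg (bigD1 t) //= leq_addr. Qed.

Lemma edeg_eq0 x : edeg x = 0%N -> x = eone B.
Proof.
by move=> x0; apply/ffunP => t; apply/eqP; rewrite eoneE -leqn0 -x0 leq_edeg.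
Qed.

Lemma edeg_gt0_split x : (0 < edeg x)%N -> exists t x', x = emul (evar t) x'.
Proof.
move=> x_gt0; apply: NNPP => no_split.
suff : x = eone B by move=> x1; rewrite x1 edeg_eone in x_gt0.
apply/ffunP => t; rewrite eoneE; apply/eqP; rewrite -leqn0 leqNgt.
by apply/negP => /evar_divides[x' x_eq]; apply: no_split; exists t, x'.
Qed.

Section Lex.
Variable key : B -> nat.
Hypothesis key_inj : injective key.

Definition lexlt z w : Prop :=
  exists v, (forall u, key u < key v -> z u = w u)%N /\ (w v < z v)%N.

Lemma lexlt_irr z : ~ lexlt z z.
Proof. by case=> v [_]; rewrite ltnn. Qed.

Lemma lexlt_trans x y z : lexlt x y -> lexlt y z -> lexlt x z.
Proof.
case=> v1 [eq1 lt1] [v2 [eq2 lt2]].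
case: (ltngtP (key v1) (key v2)) => [k12|k21|/key_inj v12].
- exists v1; split=> [u ku|]; last by rewrite -eq2.
  by rewrite eq1 // eq2 //; apply: ltn_trans k12.
- exists v2; split=> [u ku|]; last by rewrite eq1.
  by rewrite eq1 ?eq2 //; apply: ltn_trans k21.
- subst v2; exists v1; split=> [u ku|]; first by rewrite eq1 ?eq2.
  exact: ltn_trans lt2 lt1.
Qed.

Lemma lexlt_total z w : z <> w -> lexlt z w \/ lexlt w z.
Proof.
move=> zw; have [t0 zt0] : exists t, z t != w t.
  apply: NNPP => all_eq; apply: zw; apply/ffunP => t.
  by apply/eqP; apply: contra_notT all_eq => ?; exists t.
have [v zv min_v] := @arg_minnP _ t0 (fun t => z t != w t) key zt0.
have eq_below u : (key u < key v)%N -> z u = w u.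
  by move=> kuv; apply/eqP; apply: contraTT kuv => /min_v; rewrite -leqNgt.
case: (ltngtP (z v) (w v)) => [lt_zw|lt_wz|/eqP]; last by rewrite (negbTE zv).
- by right; exists v; split=> // u /eq_below.
- by left; exists v.
Qed.

Lemma lexlt_emul x y z : lexlt x y -> lexlt (emul x z) (emul y z).
Proof.
case=> v [eq_below lt_v]; exists v; split=> [u /eq_below|]; rewrite !emulE ?ltn_add2r //.
by move=> ->.
Qed.

Lemma wdeg_split_key w y v : wdeg w y =
  (\sum_(u | key u < key v) w u * y u + w v * y v + \sum_(u | key v < key u) w u * y u)%N.
Proof.
rewrite /wdeg (bigID (fun u => key u < key v)%N) /= -addnA; congr (_ + _)%N.
rewrite (bigD1 v) ?ltnn //=; congr (_ + _)%N; apply: eq_bigl => u.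
rewrite -leqNgt leq_eqVlt (inj_eq key_inj).
by case: (eqVneq u v) => [->|]; rewrite ?ltnn ?andbT.
Qed.

End Lex.
End FreeMonoid.

Section Pushforward.
Variables (W1 W2 : zmodType) (A : {fset W1}) (B : {fset W2}) (f : B -> A).
Implicit Types (x : expv A) (y z : expv B).

Definition push z : expv A := [ffun a => \sum_(t | f t == a) z t]%N.

Lemma push_emul y z : push (emul y z) = emul (push y) (push z).
Proof. by apply/ffunP => a; rewrite !ffunE -big_split; apply: eq_bigr => t _; rewrite emulE. Qed.

Lemma push_eone : push (eone B) = eone A.
Proof. by apply/ffunP => a; rewrite !ffunE big1 // => t _; rewrite eoneE. Qed.

Lemma push_evar t : push (evar t) = evar (f t).
Proof.
apply/ffunP => a; rewrite !ffunE; case: (eqVneq (f t) a) => [<-|fta].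
  by rewrite (bigD1 t) //= ffunE eqxx big1 // => u /andP[_ /negbTE ut]; rewrite ffunE ut.
by rewrite big1 // => u /eqP fua; rewrite ffunE; case: eqP fua => // -> /eqP; rewrite (negbTE fta).
Qed.

Lemma sum_push (M : nmodType) (g : A -> M) z :
  \sum_a g a *+ push z a = \sum_t g (f t) *+ z t.
Proof.
under eq_bigr => a _ do rewrite ffunE -sumrMnr.
rewrite (exchange_big_dep xpredT) //=; apply: eq_bigr => t _.
by rewrite (big_pred1 (f t)) // => a; rewrite eq_sym.
Qed.

Lemma wdeg_push w z : wdeg w (push z) = wdeg (w \o f) z.
Proof.
rewrite /wdeg; under eq_bigr => a _ do rewrite ffunE big_distrr.
rewrite (exchange_big_dep xpredT) //=; apply: eq_bigr => t _.
by rewrite (big_pred1 (f t)) // => a; rewrite eq_sym.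
Qed.

Lemma edeg_push z : edeg (push z) = edeg z.
Proof. by rewrite !edeg_wdeg wdeg_push. Qed.

Lemma push_emul_lift z x x' : push z = emul x x' ->
  exists y y', [/\ z = emul y y', push y = x & push y' = x'].
Proof.
move: {2}(edeg x) (erefl (edeg x)) => n; elim: n x z => [|n IHn] x z deg_x zxx'.
  exists (eone B), z; rewrite emul1l push_eone zxx' (edeg_eq0 deg_x) emul1l.
  by split.
have [a [x1 x_eq]] : exists a x1, x = emul (evar a) x1 by apply: edeg_gt0_split; rewrite deg_x.
have deg_x1 : edeg x1 = n by move: deg_x; rewrite x_eq edeg_emul edeg_evar => -[].
have [t /andP[/eqP fta zt_gt0]] : exists t, (f t == a) && (0 < z t)%N.
  have : (0 < push z a)%N by rewrite zxx' x_eq !emulE ffunE eqxx.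
  by rewrite ffunE lt0n sum_nat_eq0 => /forallPn[t]; rewrite negb_imply -lt0n; exists t.
have [z1 z_eq] := evar_divides zt_gt0.
have : push z1 = emul x1 x'.
  by apply: (@emulI _ _ (evar a)); rewrite emulA -x_eq -zxx' z_eq push_emul push_evar fta.
case/(IHn _ _ deg_x1) => y1 [y' [z1_eq y1x1 y'x']].
exists (emul (evar t) y1), y'; split=> //; first by rewrite z_eq z1_eq emulA.
by rewrite push_emul push_evar fta y1x1 x_eq.
Qed.

Section RefinedOrder.
Variable ltA : expv A -> expv A -> Prop.
Hypothesis ltA_adm : admissible ltA.
Variable key : B -> nat.
Hypothesis key_inj : injective key.

Definition refine_lt y z : Prop :=
  ltA (push y) (push z) \/ (push y = push z /\ lexlt key y z).

Lemma admissible_refine_lt : admissible refine_lt.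
Proof.
case: ltA_adm => irrA transA totalA mulA oneA; split.
- by move=> z [/irrA|[_ /lexlt_irr]].
- move=> x y z [lt_xy|[eq_xy lt_xy]] [lt_yz|[eq_yz lt_yz]].
  + by left; apply: transA lt_xy lt_yz.
  + by left; rewrite -eq_yz.
  + by left; rewrite eq_xy.
  + by right; split; [rewrite eq_xy | exact: lexlt_trans lt_xy lt_yz].
- move=> y z yz; have [eq_yz|/totalA[]] := classic (push y = push z).
  + by case: (lexlt_total key yz) => ?; [left|right]; right.
  + by left; left.
  + by right; left.
- move=> x y z [lt_xy|[eq_xy lt_xy]]; first by left; rewrite !push_emul; apply: mulA.
  by right; rewrite !push_emul eq_xy; split=> //; apply: lexlt_emul.
- move=> z z1; left; rewrite push_eone; apply: oneA => /(congr1 (@edeg _ _)).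
  by rewrite edeg_push edeg_eone => /edeg_eq0.
Qed.

End RefinedOrder.
End Pushforward.

Section QuadraticGroebner.
Variables (W : zmodType) (B : {fset W}) (rel lt : expv B -> expv B -> Prop).

Definition quad_reducible (d : expv B) : Prop :=
  (edeg d <= 2)%N /\ exists d', [/\ (edeg d' <= 2)%N, rel d d' & lt d' d].

Lemma quad_monomials_finite : exists s : seq (expv B), forall d, (edeg d <= 2)%N -> d \in s.
Proof.
exists [seq [ffun t => nat_of_ord (g t)] | g : {ffun B -> 'I_3}] => d deg_d.
apply/imageP; exists [ffun t => inord (d t)] => //; apply/ffunP => t.
by rewrite !ffunE inordK // ltnS (leq_trans (leq_edeg d t)).
Qed.

Lemma exists_quad_reductions (s : seq (expv B)) : exists L : seq (expv B * expv B),
  (forall p, p \in L -> [/\ rel p.1 p.2, lt p.2 p.1, (edeg p.1 <= 2)%N & (edeg p.2 <= 2)%N]) /\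
  (forall d, d \in s -> quad_reducible d -> exists2 p, p \in L & p.1 = d).
Proof.
elim: s => [|d s [L [L_red L_all]]]; first by exists [::].
have [[deg_d [d' [deg_d' rel_d lt_d]]]|irred_d] := classic (quad_reducible d).
  exists ((d, d') :: L); split=> [p|e].
    by rewrite inE => /predU1P[-> //|/L_red].
  rewrite inE => /predU1P[-> _|/L_all e_s /e_s[p pL <-]].
    by exists (d, d'); rewrite ?mem_head.
  by exists p; rewrite // inE pL orbT.
exists L; split=> // e; rewrite inE => /predU1P[-> //|/L_all //].
Qed.

Lemma quadratic_groebner_of_reducible_divisors :
  (forall x y, x <> y -> lt x y \/ lt y x) ->
  (forall z w, rel z w -> lt w z -> exists2 d, divides d z & quad_reducible d) ->
  exists L, groebner_system rel lt L /\ quadratic L.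
Proof.
move=> lt_total reducible_divisor.
have [s s_quad] := quad_monomials_finite.
have [L [L_red L_all]] := exists_quad_reductions s.
exists L; split; last by move=> p /L_red[].
split=> [p /L_red[] //|z z_irred w rel_zw].
have [->|/lt_total[]] := classic (z = w); [by left|by right|move=> lt_wz].
have [d d_z red_d] := reducible_divisor z w rel_zw lt_wz.
have [p pL p1d] := L_all d (s_quad d red_d.1) red_d.
by case: (z_irred p pL); rewrite p1d.
Qed.

End QuadraticGroebner.

Section GradedAffineMonoid.
Variables (V : zmodType) (S : V -> Prop) (deg : V -> nat).
Hypothesis S_affine : affine_in S.
Hypothesis degD : forall s t, S s -> S t -> deg (s + t) = (deg s + deg t)%N.

Lemma affine_in0 : S 0.
Proof.
case: S_affine => gens S_gens; apply/S_gens; exists (fun=> 0%N).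
by rewrite big1 // => i _; rewrite mulr0n.
Qed.

Lemma affine_inD s t : S s -> S t -> S (s + t).
Proof.
case: S_affine => gens S_gens /S_gens[c ->] /S_gens[c' ->]; apply/S_gens.
by exists (fun i => c i + c' i)%N; rewrite -big_split; apply: eq_bigr => i _; rewrite mulrnDr.
Qed.

Lemma deg0 : deg 0 = 0%N.
Proof. by have := degD affine_in0 affine_in0; rewrite addr0; lia. Qed.

Lemma affine_deg_mulrn s n : S s -> S (s *+ n) /\ deg (s *+ n) = (deg s * n)%N.
Proof.
move=> Ss; elim: n => [|n [Ssn deg_sn]].
  by rewrite mulr0n deg0 muln0; split=> //; exact: affine_in0.
by rewrite mulrS mulnS -deg_sn -degD //; split=> //; apply: affine_inD.
Qed.

Lemma deg_evalA (A : {fset V}) (x : expv A) : (forall a : A, S (val a)) ->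
  deg (evalA x) = wdeg (fun a => deg (val a)) x.
Proof.
move=> S_A; suff [] : S (evalA x) /\ deg (evalA x) = wdeg (fun a => deg (val a)) x by [].
rewrite /evalA /wdeg; apply: (big_ind2 (fun s n => S s /\ deg s = n)).
- by rewrite deg0; split=> //; exact: affine_in0.
- by move=> s n s' n' [Ss <-] [Ss' <-]; split; [exact: affine_inD | exact: degD].
- by move=> a _; exact: affine_deg_mulrn.
Qed.

End GradedAffineMonoid.

Section TildeAtoms.
Variables (m : nat) (S : 'rV[int]_m -> Prop) (deg : 'rV[int]_m -> nat).
Hypothesis S_affine : affine_in S.
Hypothesis degD : forall s t, S s -> S t -> deg (s + t) = (deg s + deg t)%N.

Lemma tilde_fst_eq0 p : tilde S deg p -> p.1 = 0 -> p = 0.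
Proof.
case: p => s i [_ /= /andP[i_ge0 i_le]] s0; rewrite s0 (deg0 S_affine degD) in i_le *.
by congr (_, _); apply/eqP; rewrite eq_le i_le.
Qed.

Lemma is_atom_tilde s i : is_atom S s -> 0 <= i <= (deg s)%:Z -> is_atom (tilde S deg) (s, i).
Proof.
case=> Ss s_neq0 s_atom i_range; split=> [//|[s0 _]|y z ty tz yz]; first exact: s_neq0.
have [y0|z0] := s_atom _ _ ty.1 tz.1 (congr1 fst yz).
  by left; exact: tilde_fst_eq0.
by right; exact: tilde_fst_eq0.
Qed.

Lemma is_atom_tilde_inv p : is_atom (tilde S deg) p ->
  is_atom S p.1 /\ 0 <= p.2 <= (deg p.1)%:Z.
Proof.
case: p => s i [[Ss /= i_range] p_neq0 p_atom]; split=> //; split=> // [s0|y z Sy Sz syz].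
  by apply: p_neq0; apply: tilde_fst_eq0.
have deg_s : deg s = (deg y + deg z)%N by rewrite syz degD.
have split_pair j k : 0 <= j <= (deg y)%:Z -> 0 <= k <= (deg z)%:Z -> i = j + k ->
    y = 0 \/ z = 0.
  move=> j_range k_range ijk.
  have p_sum : (s, i) = (y, j) + (z, k) by rewrite syz ijk.
  have [y0|z0] := p_atom (y, j) (z, k) (conj Sy j_range) (conj Sz k_range) p_sum.
    by left; exact: (congr1 fst y0).
  by right; exact: (congr1 fst z0).
move: i_range; rewrite deg_s => /andP[i_ge0 i_le].
have [i_le_y|i_gt_y] := lerP i (deg y)%:Z.
  by apply: (split_pair i 0); rewrite ?i_ge0 ?i_le_y ?addr0.
by apply: (split_pair (deg y)%:Z (i - (deg y)%:Z)); lia.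
Qed.

End TildeAtoms.

Section Tilde.
Variables (m : nat) (S : 'rV[int]_m -> Prop) (deg : 'rV[int]_m -> nat).
Local Notation V := 'rV[int]_m.
Hypothesis S_affine : affine_in S.
Hypothesis degD : forall s t, S s -> S t -> deg (s + t) = (deg s + deg t)%N.
Variable A : {fset V}.
Hypothesis A_atoms : atom_set S A.

Definition tilde_atoms : {fset V * int} :=
  [fset p in [seq (s, i%:Z) | s <- enum_fset A, i <- iota 0 (deg s).+1]]%fset.
Local Notation B := tilde_atoms.

Lemma mem_tilde_atoms p : (p \in B) = (p.1 \in A) && (0 <= p.2 <= (deg p.1)%:Z).
Proof.
rewrite inE; apply/allpairsPdep/andP => [[s [i [sA i_range ->]]]|[p1A p2_range]] /=.
  by rewrite mem_iota in i_range; split=> //; lia.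
exists p.1, `|p.2|%N; split=> //; first by rewrite -[_ :: _]/(iota 0 (deg p.1).+1) mem_iota; lia.
by case: p p2_range {p1A} => s i /= i_range; congr (_, _); lia.
Qed.

Lemma tilde_atomsP : atom_set (tilde S deg) B.
Proof.
case=> s i; rewrite mem_tilde_atoms; split=> [/andP[/A_atoms s_atom i_range]|].
  exact: is_atom_tilde.
by case/(is_atom_tilde_inv S_affine degD) => /A_atoms -> ->.
Qed.

Lemma base_mem (t : B) : (val t).1 \in A.
Proof. by have := fsvalP t; rewrite mem_tilde_atoms => /andP[]. Qed.

Definition base (t : B) : A := [` base_mem t]%fset.
Definition level (t : B) : nat := `|(val t).2|%N.

Lemma level_range t : (0 <= (val t).2 <= (deg (val (base t)))%:Z).
Proof. by have := fsvalP t; rewrite mem_tilde_atoms => /andP[]. Qed.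

Lemma level_le t : (level t <= deg (val (base t)))%N.
Proof. by case/andP: (level_range t); rewrite /level; move: (val t).2 => i; lia. Qed.

Lemma val_tilde_atom t : val t = (val (base t), (level t)%:Z).
Proof.
case/andP: (level_range t) => + _; rewrite /level; case: t => [[s i] st] /= i_ge0.
by congr (_, _); lia.
Qed.

Lemma tilde_atom_inj t u : base t = base u -> level t = level u -> t = u.
Proof. by move=> tu_base tu_level; apply: val_inj; rewrite !val_tilde_atom tu_base tu_level. Qed.

Lemma exists_tilde_atom (a : A) i : (i <= deg (val a))%N -> exists t, base t = a /\ level t = i.
Proof.
move=> i_le; have ai : (val a, i%:Z) \in B by rewrite mem_tilde_atoms /= fsvalP lez_nat i_le.
by exists [` ai]%fset; split=> //; apply: val_inj.
Qed.

Definition mass : expv B -> nat := wdeg level.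
Definition cap : expv A -> nat := wdeg (fun a => deg (val a)).

Lemma evalA_tilde z : evalA z = (evalA (push base z), (mass z)%:Z).
Proof.
rewrite /evalA (sum_push base val); apply: injective_projections => /=.
  by rewrite raddf_sum; apply: eq_bigr => t _; rewrite raddfMn val_tilde_atom.
rewrite raddf_sum /mass /wdeg (big_morph Posz PoszD erefl); apply: eq_bigr => t _.
by rewrite raddfMn val_tilde_atom /= -[in RHS]natz natrM mulr_natr natz.
Qed.

Lemma cap_evalA x : cap x = deg (evalA x).
Proof.
by rewrite (deg_evalA S_affine degD) // => a; case: (A_atoms (val a)) => /(_ (fsvalP a))[].
Qed.

Lemma mass_le_cap z : (mass z <= cap (push base z))%N.
Proof. by rewrite /cap wdeg_push; apply: leq_sum => t _; rewrite leq_mul2r level_le orbT. Qed.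

Lemma exists_push_mass x n : (n <= cap x)%N -> exists z, push base z = x /\ mass z = n.
Proof.
move: {2}(edeg x) (erefl (edeg x)) => k; elim: k x n => [|k IHk] x n deg_x n_le.
  move: n_le; rewrite (edeg_eq0 deg_x) /cap wdeg_eone leqn0 => /eqP->.
  by exists (eone B); rewrite push_eone /mass wdeg_eone.
have [a [x1 x_eq]] : exists a x1, x = emul (evar a) x1 by apply: edeg_gt0_split; rewrite deg_x.
have deg_x1 : edeg x1 = k by move: deg_x; rewrite x_eq edeg_emul edeg_evar => -[].
move: n_le; rewrite x_eq /cap wdeg_emul wdeg_evar -/(cap x1) => n_le.
have [t [ta t_level]] := exists_tilde_atom (geq_minr n (deg (val a))).
have [z1 [z1_push z1_mass]] := IHk x1 (n - minn n (deg (val a)))%N deg_x1 ltac:(lia).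
exists (emul (evar t) z1); split; first by rewrite push_emul push_evar ta z1_push.
by rewrite /mass wdeg_emul wdeg_evar -/(mass z1) z1_mass t_level; lia.
Qed.

(* Variables are sorted by atom and, within an atom, by decreasing index. *)
Definition rank (a : A) : nat := enum_rank a.
Definition bound : nat := (\max_(a : A) deg (val a)).+1.
Definition keyp (a : A) (i : nat) : nat := (rank a * bound + (bound - i))%N.
Definition key (t : B) : nat := keyp (base t) (level t).

Lemma deg_lt_bound (a : A) : (deg (val a) < bound)%N.
Proof. by rewrite ltnS; apply: (@leq_bigmax _ (fun a : A => deg (val a))). Qed.

Lemma level_lt_bound t : (level t < bound)%N.
Proof. exact: leq_ltn_trans (level_le t) (deg_lt_bound _). Qed.

Lemma ltn_keyp a b i j : (i < bound)%N -> (j < bound)%N ->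
  (keyp a i < keyp b j)%N = (rank a < rank b)%N || ((a == b) && (j < i)%N).
Proof.
rewrite /keyp => i_lt j_lt.
case: (ltngtP (rank a) (rank b)) => [ab|ba|/val_inj/enum_rank_inj ->] /=.
- by have := leq_mul ab (leqnn bound); rewrite mulSn => ?; apply/idP; lia.
- have -> : (a == b) = false by apply: contraTF ba => /eqP->; rewrite ltnn.
  by have := leq_mul ba (leqnn bound); rewrite mulSn => ?; apply/negbTE; lia.
- by rewrite eqxx; apply/idP/idP; lia.
Qed.

Lemma ltn_key t u : (key t < key u)%N =
  (rank (base t) < rank (base u))%N || ((base t == base u) && (level u < level t)%N).
Proof. exact: ltn_keyp (level_lt_bound t) (level_lt_bound u). Qed.

Lemma key_inj : injective key.
Proof.
move=> t u tu; have := ltn_key t u; have := ltn_key u t; rewrite tu ltnn.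
case: (ltngtP (rank (base t)) (rank (base u))) => //= /val_inj/enum_rank_inj tu_base.
rewrite tu_base eqxx /= => /esym/negbT; rewrite -leqNgt => ut /esym/negbT; rewrite -leqNgt => tu'.
by apply: tilde_atom_inj => //; apply/eqP; rewrite eqn_leq ut tu'.
Qed.

Definition tilde_lt (ltA : expv A -> expv A -> Prop) : expv B -> expv B -> Prop :=
  refine_lt base ltA key.

Lemma admissible_tilde_lt ltA : admissible ltA -> admissible (tilde_lt ltA).
Proof. by move=> ltA_adm; have := admissible_refine_lt base ltA_adm key_inj. Qed.

Lemma ltn_key_same_base t u : base t = base u -> (key t < key u)%N = (level u < level t)%N.
Proof. by move=> tu; rewrite ltn_key tu ltnn eqxx. Qed.

Lemma exists_lower_level z w v : push base z = push base w ->
    (forall u, key u < key v -> z u = w u)%N -> (z v < w v)%N ->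
  exists t, [/\ base t = base v, (level t < level v)%N & (0 < z t)%N].
Proof.
move=> push_eq eq_below lt_v; apply: NNPP => no_lower.
have le_fiber t : (base t == base v) && (t != v) -> (z t <= w t)%N.
  case/andP=> /eqP tv_base tv; case: (ltngtP (key t) (key v)) => [/eq_below->//|vt|/key_inj tv'].
    rewrite ltn_key_same_base // in vt; rewrite leqNgt; apply/negP => zt_gt.
    by apply: no_lower; exists t; split; rewrite // (leq_ltn_trans _ zt_gt).
  by rewrite tv' eqxx in tv.
have : (push base z (base v) < push base w (base v))%N.
  rewrite !ffunE (bigD1 v) //= [X in (_ < X)%N](bigD1 v) //=.
  by rewrite -addSn leq_add //; apply: leq_sum.
by rewrite push_eq ltnn.
Qed.

Lemma key_between v u i : (i < bound)%N -> (key v < key u)%N -> (key u <= keyp (base v) i)%N ->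
  [/\ base u = base v, (i <= level u)%N & (level u < level v)%N].
Proof.
move=> i_lt; rewrite ltn_key => vu; rewrite leqNgt /key ltn_keyp ?level_lt_bound //; move: vu.
case: (ltngtP (rank (base v)) (rank (base u))) => [//|uv|/val_inj/enum_rank_inj ->].
  by rewrite (_ : base v == base u = false) //; apply: contraTF uv => /eqP->; rewrite ltnn.
by rewrite eqxx /= -leqNgt => lt_uv le_iu.
Qed.

Lemma tail_mass_le z v t0 : base t0 = base v -> (level t0 < level v)%N ->
    (forall u, base u = base v -> level u < level v -> 0 < z u -> level u <= level t0)%N ->
    (forall u, 0 < level u -> keyp (base v) (level t0).+1 < key u -> z u <= (t0 == u))%N ->
  (\sum_(u | key v < key u) level u * z u <= level t0)%N.
Proof.
move=> t0_base t0_level t0_max stuck.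
have succ_lt : ((level t0).+1 < bound)%N.
  by rewrite (leq_ltn_trans _ (deg_lt_bound (base v))) // (leq_trans t0_level (level_le v)).
apply: (@leq_trans (\sum_(u | key v < key u) (u == t0) * level t0)%N); last first.
  rewrite (bigD1 t0) ?ltn_key_same_base //= eqxx mul1n big1 ?addn0 // => u /andP[_ /negbTE->].
  by rewrite mul0n.
apply: leq_sum => u vu; case: (eqVneq u t0) => [->|ut0].
  case: (posnP (level t0)) => [->//|t0_pos].
  have t0_after : (keyp (base v) (level t0).+1 < key t0)%N.
    by rewrite /key ltn_keyp ?level_lt_bound // t0_base eqxx ltnSn orbT.
  have := stuck t0 t0_pos t0_after; rewrite eqxx => zt0_le1.
  by rewrite mul1n -[X in (_ <= X)%N]muln1 leq_mul2l zt0_le1 orbT.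
rewrite mul0n leqn0 muln_eq0; case: (posnP (level u)) => [//|u_pos].
case: (ltnP (keyp (base v) (level t0).+1) (key u)) => [u_after|u_before].
  by have := stuck u u_pos u_after; rewrite eq_sym (negbTE ut0) leqn0 => ->; rewrite orbT.
have [uv_base t0_u u_v] := key_between succ_lt vu u_before.
apply/orP; right; rewrite eqn0Ngt; apply/negP => zu.
by have := leq_ltn_trans (t0_max u uv_base u_v zu) t0_u; rewrite ltnn.
Qed.

Lemma exists_improvable_pair z w v : push base z = push base w -> mass z = mass w ->
    (forall u, key u < key v -> z u = w u)%N -> (z v < w v)%N ->
  exists t u, [/\ (0 < z t)%N, ((t == u) < z u)%N, (level t < deg (val (base t)))%N,
                  (0 < level u)%N & (keyp (base t) (level t).+1 < key u)%N].
Proof.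
move=> push_eq mass_eq eq_below lt_v.
have [t1 [t1_base t1_level t1_z]] := exists_lower_level push_eq eq_below lt_v.
pose lower t := [&& base t == base v, level t < level v & 0 < z t]%N.
have [|t0 /and3P[/eqP t0_base t0_level t0_z] t0_max] := @arg_maxnP _ t1 lower level.
  by rewrite /lower t1_base eqxx t1_level t1_z.
apply: NNPP => no_pair.
(* Otherwise only [t0] carries index mass of [z] after [v], too little to balance [z v < w v]. *)
have stuck u : (0 < level u)%N -> (keyp (base v) (level t0).+1 < key u)%N -> (z u <= (t0 == u))%N.
  move=> u_level u_after; rewrite leqNgt; apply/negP => zu; apply: no_pair; exists t0, u.
  by split; rewrite // t0_base ?(leq_trans t0_level (level_le v)).
have below : (\sum_(u | key u < key v) level u * z u = \sum_(u | key u < key v) level u * w u)%N.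
  by apply: eq_bigr => u /eq_below->.
move: mass_eq; rewrite /mass (wdeg_split_key key_inj level z v).
rewrite (wdeg_split_key key_inj level w v) below.
set tail := (\sum_(u | key v < key u) level u * z u)%N.
have tail_le : (tail <= level t0)%N.
  apply: tail_mass_le stuck => // u uv_base u_v zu.
  by apply: t0_max; rewrite /lower uv_base eqxx u_v zu.
move/eqP; rewrite -!addnA eqn_add2l => /eqP tails_eq.
suff : (level v * z v + tail < level v * w v)%N by rewrite tails_eq ltnNge leq_addr.
apply: leq_trans (leq_mul (leqnn (level v)) lt_v).
by rewrite mulnS [(level v + _)%N]addnC ltn_add2l (leq_ltn_trans tail_le).
Qed.

Section Reduction.
Variable ltA : expv A -> expv A -> Prop.
Hypothesis ltA_adm : admissible ltA.
Variable L : seq (expv A * expv A).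
Hypothesis L_groebner : groebner_system (@defcong _ A) ltA L.
Hypothesis L_quadratic : quadratic L.

Local Notation ltB := (tilde_lt ltA).
Local Notation reducible := (quad_reducible (@defcong _ B) ltB).

Lemma reducible_divisor_push z w : defcong z w -> ltA (push base w) (push base z) ->
  exists2 d, divides d z & reducible d.
Proof.
move=> zw lt_push.
have push_cong : defcong (push base z) (push base w).
  by move: zw; rewrite /defcong !evalA_tilde => -[].
have [p pL [x' push_z]] : exists2 p, p \in L & divides p.1 (push base z).
  case: ltA_adm L_groebner => irrA transA _ _ _ [_ L_min]; apply: NNPP => no_div.
  case: (L_min (push base z) _ (push base w) push_cong) => [p pL p_div|zw_eq|lt_zw].
  - by apply: no_div; exists p.
  - by rewrite zw_eq in lt_push; exact: irrA lt_push.
  - exact: irrA (transA _ _ _ lt_zw lt_push).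
case: L_groebner => /(_ p pL)[p_cong p_lt] _; have [deg_p1 deg_p2] := L_quadratic pL.
have [d [y [z_eq d_push _]]] := push_emul_lift push_z.
have [|d' [d'_push d'_mass]] := @exists_push_mass p.2 (mass d).
  by rewrite cap_evalA -p_cong -cap_evalA -d_push mass_le_cap.
exists d; first by rewrite z_eq; exists y.
split; first by rewrite -(edeg_push base) d_push.
exists d'; split; first by rewrite -(edeg_push base) d'_push.
  by rewrite /defcong !evalA_tilde d_push d'_push d'_mass p_cong.
by left; rewrite d_push d'_push.
Qed.

Lemma reducible_divisor_lex z w : defcong z w -> push base w = push base z -> lexlt key w z ->
  exists2 d, divides d z & reducible d.
Proof.
move=> zw push_eq [v [eq_below lt_v]].
have mass_eq : mass z = mass w by move: zw; rewrite /defcong !evalA_tilde => -[].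
have [t [u [zt zu t_deg u_pos t'_u]]] :=
  exists_improvable_pair (esym push_eq) mass_eq (fun x kx => esym (eq_below x kx)) lt_v.
have [t' [t'_base t'_level]] := exists_tilde_atom t_deg.
have [u' [u'_base u'_level]] := exists_tilde_atom (leq_trans (leq_pred (level u)) (level_le u)).
rewrite -t'_base -t'_level -/(key t') in t'_u.
have t'_t : (key t' < key t)%N by rewrite ltn_key_same_base // t'_level.
have u_u' : (key u < key u')%N by rewrite ltn_key_same_base // u'_level prednK ?leqnn // ltn_predL.
exists (emul (evar t) (evar u)).
  apply: divides_of_le => x; rewrite emulE !ffunE; case: (eqVneq x u) => [->|xu].
    by rewrite addn1 eq_sym.
  by rewrite addn0; case: eqP => // ->.
split; first by rewrite edeg_emul !edeg_evar.
exists (emul (evar t') (evar u')); split; first by rewrite edeg_emul !edeg_evar.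
  rewrite /defcong !evalA_tilde !push_emul !push_evar t'_base u'_base /mass !wdeg_emul !wdeg_evar.
  by rewrite t'_level u'_level; congr (_, Posz _); lia.
right; split; first by rewrite !push_emul !push_evar t'_base u'_base.
have neq_later x y : (key x < key y)%N -> (x == y) = false.
  by move=> kxy; apply/negbTE; apply: contraTneq kxy => ->; rewrite ltnn.
exists t'; split=> [x x_t'|]; last first.
  by rewrite !emulE !ffunE eqxx (neq_later _ _ t'_t) (neq_later _ _ t'_u).
have x_u := ltn_trans x_t' t'_u.
rewrite !emulE !ffunE (neq_later _ _ x_t') (neq_later _ _ (ltn_trans x_t' t'_t)).
by rewrite (neq_later _ _ x_u) (neq_later _ _ (ltn_trans x_u u_u')).
Qed.

Lemma tilde_quadratic_groebner :
  exists L', groebner_system (@defcong _ B) ltB L' /\ quadratic L'.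
Proof.
apply: quadratic_groebner_of_reducible_divisors => [y z|z w zw [lt_push|[push_eq lt_lex]]].
- by case: (admissible_tilde_lt ltA_adm) => _ _ total _ _; exact: total.
- exact: reducible_divisor_push zw lt_push.
- exact: reducible_divisor_lex zw push_eq lt_lex.
Qed.

End Reduction.
End Tilde.

Theorem corollary5p5 (m : nat) (S : 'rV[int]_m -> Prop) (deg : 'rV[int]_m -> nat) :
  affine_in S -> reduced S ->
  (forall s t, S s -> S t -> deg (s + t) = (deg s + deg t)%N) ->
  has_quadratic_groebner S ->
  has_quadratic_groebner (tilde S deg).
Proof.
move=> S_affine _ degD [A [A_atoms [ltA [ltA_adm [L [L_groebner L_quadratic]]]]]].
exists (tilde_atoms deg A); split; first exact: tilde_atomsP.
exists (tilde_lt ltA); split; first exact: admissible_tilde_lt.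
exact (tilde_quadratic_groebner S_affine degD A_atoms ltA_adm L_groebner L_quadratic).
Qed.
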